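(* For all $r\ge0$ and $2\le n\le\infty$, a morphism $f\colon A\to B$ of $n$-multicomplexes has the right lifting property with respect to every morphism in $I^n_r$ if and only if $f$ is an $E_r$-quasi-isomorphism and $f$ has the right lifting property with respect to every morphism in $J^n_0\cup J^n_r$. In other words, $I^n_r\text{-inj}=\mathcal E^n_r\cap J^n_0\text{-inj}\cap J^n_r\text{-inj}$.
   Context: Throughout, $R$ is a commutative unital ring. For $1\le n\le\infty$, an $n$-multicomplex is a $\mathbb Z\times\mathbb Z$-bigraded $R$-module $A=\{A^{p,q}\}$ with $R$-linear maps $d_i\colon A\to A$ ($i\ge0$) of bidegree $(-i,1-i)$ such that $\sum_{i+j=l}(-1)^id_id_j=0$ for all $l\ge0$, and $d_i=0$ for all $i\ge n$. Morphisms are bidegree $(0,0)$ maps commuting with all $d_i$; category $\mathrm{Ch}_n$. For a set $S$ of morphisms, $S$-inj is the class of morphisms with the right lifting property with respect to all of $S$. Spectral sequence: $Z_0^{p,q}(A)=A^{p,q}$; for $r\ge1$, $Z_r^{p,q}(A)$ is the set of $a_0\in A^{p,q}$ for which there exist $a_j\in A^{p-j,q-j}$ ($1\le j\le r-1$) with $\sum_{i+j=l}(-1)^id_ia_j=0$ for $0\le l\le r-1$. $B_0=0$, $B_1^{p,q}(A)=A^{p,q}\cap\operatorname{im}d_0$, and for $r\ge2$, $B_r^{p,q}(A)$ is the set of $x\in A^{p,q}$ for which there exist $b_i\in A^{p+r-1-i,q+r-2-i}$ ($0\le i\le r-1$) with $x=\sum_{i=0}^{r-1}(-1)^id_ib_{r-1-i}$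 and $\sum_{i=0}^l(-1)^id_ib_{l-i}=0$ for $0\le l\le r-2$. $E_r^{p,q}(A)=Z_r^{p,q}(A)/B_r^{p,q}(A)$, the spectral sequence of the column-filtered total complex. A morphism $f$ is an $E_r$-quasi-isomorphism if $E_{r+1}(f)$ is an isomorphism; $\mathcal E^n_r$ denotes the class of these in $\mathrm{Ch}_n$. Representing objects: $\mathbb D^n(p,q)$ is the free $n$-multicomplex on one generator in bidegree $(p,q)$. $\mathcal ZW^n_0(p,q)=\mathbb D^n(p,q)$ with generator $a_0$. $\mathcal ZW^n_1(p,q)$ is the pushout in $\mathrm{Ch}_n$ of $0\leftarrow\mathbb D^n(p,q+1)\to\mathbb D^n(p,q)$, the right map sending the generator to $d_0a_0$. For $r\ge2$, $\mathcal ZW^n_r(p,q)$ is the pushout in $\mathrm{Ch}_n$ of $\mathcal ZW^n_{r-1}(p,q)\leftarrow\mathbb D^n(p-r+1,q-r+2)\to\mathbb D^n(p-r+1,q-r+1)$, where, writing $x$ for the generator of the middle object and $a_{r-1}$ for that of the right one, the left map sends $x\mapsto\sum_{i=1}^{r-1}(-1)^{i+1}d_ia_{r-1-i}$ and the right map sends $x\mapsto d_0a_{r-1}$; images of $a_0,\dots,a_{r-1}$ keep their names ($a_i$ in bidegree $(p-i,q-i)$). $\mathcal BW^n_0(p,q-1)=0$, $\mathcal BW^n_1(p,q-1)=\mathbb D^n(p,q-1)$, and for $r\ge2$, $\mathcal BW^n_r(p,q-1)=\mathcal ZW^n_{r-1}(p+r-1,q+r-2)\oplus\mathbb D^n(p,q-1)\oplus\mathcal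 ZW^n_{r-1}(p-1,q-1)$. The morphism $\iota_r\colon\mathcal ZW^n_r(p,q)\to\mathcal BW^n_r(p,q-1)$: $\iota_0=0$; $\iota_1(a_0)=d_0e$ where $e$ generates $\mathbb D^n(p,q-1)$; for $r\ge2$, writing $b_0,\dots,b_{r-2}$, $e$, $c_0,\dots,c_{r-2}$ for the generators of the three summands, $\iota_r(a_j)=d_je+(-1)^j\sum_{i=j+1}^{r+j-1}(-1)^id_ib_{r+j-1-i}+c_{j-1}$ ($0\le j\le r-1$, $c_{-1}:=0$). Generating sets: $I^n_r=\{\iota_{r+1}\colon\mathcal ZW^n_{r+1}(p,q)\to\mathcal BW^n_{r+1}(p,q-1)\}_{p,q\in\mathbb Z}$ and $J^n_r=\{0\to\mathcal ZW^n_r(p,q)\}_{p,q\in\mathbb Z}$. *)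

From HB Require Import structures.
From mathcomp Require Import all_boot all_order all_algebra.
Set Implicit Arguments.
Unset Strict Implicit.
Unset Printing Implicit Defensive.
Import Order.TTheory GRing.Theory Num.Theory.
Local Open Scope ring_scope.

Section Multicomplexes.
Variable R : comPzRingType.

(* n : option nat ;  Some m = the finite value m,  None = infinity. *)
Definition above (n : option nat) (i : nat) : bool :=
  if n is Some m then (m <= i)%N else false.

Definition is_lin (U V : lmodType R) (f : U -> V) : Prop :=
  forall (a : R) (u v : U), f (a *: u + v) = a *: f u + f v.

(* Transport between bigraded pieces: the identity when the bidegrees agree,
   zero otherwise. *)
Definition tr (A : int -> int -> lmodType R) (p q p' q' : int) (x : A p q)
  : A p' q' :=
  match p =P p', q =P q' with
  | ReflectT e1, ReflectT e2 =>
      eq_rect q (fun y => A p' y) (eq_rect p (fun z => A z q) x p' e1) q' e2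
  | _, _ => 0
  end.
Arguments tr {A p q p' q'} x.

(* The structure map d_i of bidegree (-i,1-i) is encoded
   as the family of all its "matrix blocks" dd i p q p' q' : A^{p,q} -> A^{p',q'},
   which vanish unless (p',q') = (p-i, q+1-i). *)
Unset Implicit Arguments.
Record mcx (n : option nat) := Mcx {
  obj :> int -> int -> lmodType R;
  dd : nat -> forall p q p' q' : int, obj p q -> obj p' q';
  dd_lin : forall i p q p' q', is_lin (dd i p q p' q');
  dd_deg : forall i p q p' q' (x : obj p q),
      (p' != p - i%:Z) || (q' != q + 1 - i%:Z) -> dd i p q p' q' x = 0;
  dd_vanish : forall i p q p' q' (x : obj p q), above n i -> dd i p q p' q' x = 0;
  (* sum_{i+j=l} (-1)^i d_i d_j = 0 *)
  dd_rel : forall (l : nat) (p q p' q' : int) (x : obj p q),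
      \sum_(i < l.+1)
         (-1) ^+ i *: dd i (p - (l - i)%N%:Z) (q + 1 - (l - i)%N%:Z) p' q'
                         (dd (l - i) p q (p - (l - i)%N%:Z) (q + 1 - (l - i)%N%:Z) x)
      = 0
}.
Arguments obj {n} m.
Arguments dd {n} m i {p q p' q'} x.

Record mhom (n : option nat) (A B : mcx n) := MHom {
  hf : forall p q, A p q -> B p q;
  hf_lin : forall p q, is_lin (hf p q);
  hf_comm : forall i p q p' q' (x : A p q),
      hf p' q' (dd A i (p' := p') (q' := q') x) = dd B i (hf p q x)
}.
Arguments mhom {n}.
Arguments hf {n A B} m {p q} x.
Set Implicit Arguments.

Definition heq (n : option nat) (A B : mcx n) (f g : mhom A B) : Prop :=
  forall p q (x : A p q), hf f x = hf g x.

Definition rlp (n : option nat) (X Y A B : mcx n) (i : mhom X Y) (f : mhom A B) : Prop :=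
  forall (u : mhom X A) (v : mhom Y B),
    (forall p q (x : X p q), hf f (hf u x) = hf v (hf i x)) ->
    exists h : mhom Y A,
      (forall p q (x : X p q), hf h (hf i x) = hf u x) /\
      (forall p q (y : Y p q), hf f (hf h y) = hf v y).

Lemma zero_lin (U V : lmodType R) : is_lin (fun _ : U => (0 : V)).
Proof. by move=> a u v; rewrite scaler0 addr0. Qed.

Definition zero_mcx (n : option nat) : mcx n.
Proof.
refine (@Mcx n (fun _ _ => 'rV[R]_0) (fun _ _ _ _ _ _ => 0) _ _ _ _).
- by move=> *; apply: zero_lin.
- by [].
- by [].
- by move=> *; rewrite big1 // => i _; rewrite scaler0.
Defined.

Lemma lin0 (U V : lmodType R) (f : U -> V) : is_lin f -> f 0 = 0.
Proof.
move=> hf; have := hf 1 0 0; rewrite scaler0 addr0 scale1r => h.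
by apply: (@addrI _ (f 0)); rewrite addr0 -h.
Qed.

Definition zero_hom (n : option nat) (Z : mcx n) : mhom (zero_mcx n) Z.
Proof.
refine (@MHom n (zero_mcx n) Z (fun _ _ _ => 0) _ _).
- by move=> *; apply: zero_lin.
- by move=> i p q p' q' x /=; rewrite lin0 //; apply: dd_lin.
Defined.

Definition zrel (n : option nat) (A : mcx n) (P Q : int)
  (a : forall j : nat, A (P - j%:Z) (Q - j%:Z)) (l : nat) : Prop :=
  \sum_(j < l.+1)
     (-1) ^+ (l - j) *: dd A (l - j) (p' := P - l%:Z) (q' := Q - l%:Z + 1) (a j) = 0.

Definition Zr (n : option nat) (r : nat) (A : mcx n) (p q : int) (x : A p q) : Prop :=
  match r with
  | 0 => True
  | _ => exists a : forall j : nat, A (p - j%:Z) (q - j%:Z),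
           tr (a 0%N) = x /\ forall l : nat, (l < r)%N -> zrel a l
  end.

Definition Br (n : option nat) (r : nat) (A : mcx n) (p q : int) (x : A p q) : Prop :=
  match r with
  | 0 => x = 0
  | 1 => exists b : A p (q - 1), x = dd A 0 b
  | _ => exists b : forall k : nat, A (p + r%:Z - 1 - k%:Z) (q + r%:Z - 2 - k%:Z),
           x = \sum_(i < r) (-1) ^+ i *: dd A i (b (r - 1 - i)%N)
           /\ forall l : nat, (l <= r - 2)%N ->
                \sum_(i < l.+1) (-1) ^+ i *:
                   dd A i (p' := p + r%:Z - 1 - l%:Z) (q' := q + r%:Z - 1 - l%:Z)
                      (b (l - i)%N) = 0
  end.

(* f is an E_r-quasi-isomorphism: E_{r+1}(f) : Z_{r+1}/B_{r+1} -> Z_{r+1}/B_{r+1}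
   is bijective (surjective and injective) in every bidegree. *)
Definition Eqi (n : option nat) (r : nat) (A B : mcx n) (f : mhom A B) : Prop :=
  forall p q : int,
    (forall z : B p q, Zr r.+1 z ->
       exists z' : A p q, Zr r.+1 z' /\ Br r.+1 (hf f z' - z)) /\
    (forall z : A p q, Zr r.+1 z -> Br r.+1 (hf f z) -> Br r.+1 z).

(* (Z, a) is (a realisation of) ZW^n_s(p,q) with its generators a_0,...,a_{s-1}
   (a_0 only when s = 0): the iterated pushout of free multicomplexes,
   i.e. the multicomplex generated by the a_j subject to the relations
   zrel l, l < s. *)
Definition IsZW (n : option nat) (s : nat) (p q : int) (Z : mcx n)
  (a : forall j : nat, Z (p - j%:Z) (q - j%:Z)) : Prop :=
  (forall l : nat, (l < s)%N -> zrel a l) /\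
  forall (C : mcx n) (c : forall j : nat, C (p - j%:Z) (q - j%:Z)),
    (forall l : nat, (l < s)%N -> zrel c l) ->
    (exists phi : mhom Z C, forall j : nat, (j < maxn s 1)%N -> hf phi (a j) = c j) /\
    (forall phi psi : mhom Z C,
       (forall j : nat, (j < maxn s 1)%N -> hf phi (a j) = hf psi (a j)) -> heq phi psi).

Arguments IsZW {n} s p q {Z} a.

(* (W, b, e, c) is (a realisation of) BW^n_s(p,q-1) for s >= 1:
   ZW_{s-1}(p+s-1,q+s-2) (+) D(p,q-1) (+) ZW_{s-1}(p-1,q-1) with generators
   b_0..b_{s-2}, e, c_0..c_{s-2}; for s = 1 this is D(p,q-1) generated by e. *)
Definition IsBW (n : option nat) (s : nat) (p q : int) (W : mcx n)
  (b : forall j : nat, W (p + s%:Z - 1 - j%:Z) (q + s%:Z - 2 - j%:Z))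
  (e : W p (q - 1))
  (c : forall j : nat, W (p - 1 - j%:Z) (q - 1 - j%:Z)) : Prop :=
  (forall l : nat, (l < s.-1)%N -> zrel b l) /\
  (forall l : nat, (l < s.-1)%N -> zrel c l) /\
  forall (C : mcx n)
         (b' : forall j : nat, C (p + s%:Z - 1 - j%:Z) (q + s%:Z - 2 - j%:Z))
         (e' : C p (q - 1))
         (c' : forall j : nat, C (p - 1 - j%:Z) (q - 1 - j%:Z)),
    (forall l : nat, (l < s.-1)%N -> zrel b' l) ->
    (forall l : nat, (l < s.-1)%N -> zrel c' l) ->
    (exists phi : mhom W C,
        (forall j : nat, (j < s.-1)%N -> hf phi (b j) = b' j) /\
        hf phi e = e' /\
        (forall j : nat, (j < s.-1)%N -> hf phi (c j) = c' j)) /\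
    (forall phi psi : mhom W C,
        (forall j : nat, (j < s.-1)%N -> hf phi (b j) = hf psi (b j)) ->
        hf phi e = hf psi e ->
        (forall j : nat, (j < s.-1)%N -> hf phi (c j) = hf psi (c j)) ->
        heq phi psi).

Arguments IsBW {n} s p q {W} b e c.

Definition iota_spec (n : option nat) (s : nat) (p q : int) (Z W : mcx n)
  (a : forall j : nat, Z (p - j%:Z) (q - j%:Z))
  (b : forall j : nat, W (p + s%:Z - 1 - j%:Z) (q + s%:Z - 2 - j%:Z))
  (e : W p (q - 1))
  (c : forall j : nat, W (p - 1 - j%:Z) (q - 1 - j%:Z))
  (i : mhom Z W) : Prop :=
  forall j : nat, (j < s)%N ->
    hf i (a j) =
      dd W j (p' := p - j%:Z) (q' := q - j%:Z) e
      + (-1) ^+ j *: \sum_(j.+1 <= k < s + j)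
                        (-1) ^+ k *: dd W k (p' := p - j%:Z) (q' := q - j%:Z)
                                            (b (s + j - 1 - k)%N)
      + (if j is j'.+1 then tr (c j') else 0).

Arguments iota_spec {n} s p q {Z W} a b e c i.

(* f in I^n_r-inj : RLP against iota_{r+1} : ZW_{r+1}(p,q) -> BW_{r+1}(p,q-1),
   for all p, q. *)
Definition Iinj (n : option nat) (r : nat) (A B : mcx n) (f : mhom A B) : Prop :=
  forall (p q : int) (Z W : mcx n) (a : forall j : nat, Z (p - j%:Z) (q - j%:Z))
         (b : forall j : nat, W (p + r.+1%:Z - 1 - j%:Z) (q + r.+1%:Z - 2 - j%:Z))
         (e : W p (q - 1))
         (c : forall j : nat, W (p - 1 - j%:Z) (q - 1 - j%:Z))
         (i : mhom Z W),
    IsZW r.+1 p q a -> IsBW r.+1 p q b e c -> iota_spec r.+1 p q a b e c i -> rlp i f.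

Definition Jinj (n : option nat) (r : nat) (A B : mcx n) (f : mhom A B) : Prop :=
  forall (p q : int) (Z : mcx n) (a : forall j : nat, Z (p - j%:Z) (q - j%:Z)),
    IsZW r p q a -> rlp (zero_hom Z) f.

End Multicomplexes.
Arguments mhom {R n} A B.

(* Everything is transported to the total module T(A) = prod_{p,q} A^{p,q}, where d_i becomes
   an endomorphism D_i.  A k-chain at (P, Q) is a family (a_j) with a_j homogeneous of bidegree
   (P - j, Q - j) satisfying the first k relations sum_{i+j=l} (-1)^i D_i a_j = 0; Z_{r+1} consists
   of the heads a_0 of (r+1)-chains and B_{r+1} of the r-th relations of r-chains.
   By the universal properties of ZW and BW, the right lifting property against J_k says that
   k-chains of B lift to k-chains of A, and the one against iota_{r+1} says that whenever
   f(a) = iota(b, c) for an (r+1)-chain a of A and r-chains b, c of B, then a = iota(b', c') for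
   r-chains b', c' of A lifting b, c.  Here iota(b, c) is itself an (r+1)-chain whose head is the
   r-th relation of b, which is where E_{r+1} enters: surjectivity of E_{r+1}(f) together with
   J_0 and J_r lets one lift (r+1)-chains, and injectivity of E_{r+1}(f) produces the bounding
   chain b'.  Conversely, E_r-quasi-isomorphism and the J-liftings are special iota-liftings.
   ZW, BW and iota are realised by free multicomplexes, needed to test the lifting property. *)

From HB Require Import structures.
From mathcomp Require Import all_boot all_order all_algebra.
From mathcomp Require Import boolp zify.
Set Implicit Arguments.
Unset Strict Implicit.
Unset Printing Implicit Defensive.
Import GRing.Theory.
Local Open Scope ring_scope.

Arguments dd {R n} m i {p q p' q'} x.
Arguments hf {R n A B} m {p q} x.
Arguments dd_lin {R n} m i p q p' q'.
Arguments dd_deg {R n} m i p q p' q' x.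
Arguments dd_rel {R n} m l p q p' q' x.
Arguments hf_lin {R n A B} m p q.
Arguments hf_comm {R n A B} m i p q p' q' x.

Lemma linear_is_lin (R : comPzRingType) (U V : lmodType R) (f : U -> V) :
  is_lin f -> linear f.
Proof. by move=> fl a u v; rewrite fl. Qed.

HB.instance Definition _ (R : comPzRingType) n (A B : mcx R n) (f : mhom A B) p q :=
  GRing.isLinear.Build R (A p q) (B p q) _ (@hf R n A B f p q)
    (linear_is_lin (hf_lin f p q)).
HB.instance Definition _ (R : comPzRingType) n (A : mcx R n) i p q p' q' :=
  GRing.isLinear.Build R (A p q) (A p' q') _ (@dd R n A i p q p' q')
    (linear_is_lin (dd_lin A i p q p' q')).

Section Transport.
Variables (R : comPzRingType) (A : int -> int -> lmodType R).

Lemma tr_id p q (x : A p q) : tr p q x = x.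
Proof.
rewrite /tr; case: (p =P p) => [e1|//]; case: (q =P q) => [e2|//].
by rewrite (eq_irrelevance e1 erefl) (eq_irrelevance e2 erefl).
Qed.

Lemma tr_out p q p' q' (x : A p q) : ~ (p = p' /\ q = q') -> tr p' q' x = 0.
Proof.
move=> h; rewrite /tr; case: (p =P p') => [e1|//]; case: (q =P q') => [e2|//].
by case: h.
Qed.

Lemma tr_is_linear p q p' q' : linear (@tr R A p q p' q').
Proof.
move=> a u v; have [[<- <-]|ne] := lem (p = p' /\ q = q'); first by rewrite !tr_id.
by rewrite !tr_out // scaler0 addr0.
Qed.

HB.instance Definition _ p q p' q' :=
  GRing.isLinear.Build R (A p q) (A p' q') _ (@tr R A p q p' q') (@tr_is_linear p q p' q').
End Transport.

Lemma hf_tr (R : comPzRingType) n (A B : mcx R n) (f : mhom A B) p q p' q' (x : A p q) :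
  hf f (tr p' q' x) = tr p' q' (hf f x).
Proof.
have [[<- <-]|ne] := lem (p = p' /\ q = q'); first by rewrite !tr_id.
by rewrite !tr_out // raddf0.
Qed.

Lemma dd_tr (R : comPzRingType) n (A : mcx R n) i p q p1 q1 p' q' (x : A p q) :
  p = p1 -> q = q1 -> dd A i (p' := p') (q' := q') (tr p1 q1 x) = dd A i x.
Proof. by move=> <- <-; rewrite tr_id. Qed.

Lemma dd_out (R : comPzRingType) n (A : mcx R n) i p q p' q' (x : A p q) :
  ~ (p' = p - i%:Z /\ q' = q + 1 - i%:Z) -> dd A i (p' := p') (q' := q') x = 0.
Proof. by move=> h; apply: dd_deg; lia. Qed.

(** * The total module *)

Definition tot (R : comPzRingType) n (A : mcx R n) := forall p q : int, A p q.
HB.instance Definition _ R n A := gen_eqMixin (@tot R n A).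
HB.instance Definition _ R n A := gen_choiceMixin (@tot R n A).

Section TotalModule.
Variables (R : comPzRingType) (n : option nat) (A : mcx R n).
Local Notation T := (tot A).

Lemma tot_ext (x y : T) : (forall p q, x p q = y p q) -> x = y.
Proof. move=> h; do 2 apply: functional_extensionality_dep => ?; exact: h. Qed.

Let tadd (x y : T) : T := fun p q => x p q + y p q.
Let topp (x : T) : T := fun p q => - x p q.
Let tzero : T := fun p q => 0.
Let tscale (a : R) (x : T) : T := fun p q => a *: x p q.

Let taddA : associative tadd.
Proof. by move=> x y z; apply: tot_ext => p q; rewrite /tadd addrA. Qed.
Let taddC : commutative tadd.
Proof. by move=> x y; apply: tot_ext => p q; rewrite /tadd addrC. Qed.
Let tadd0 : left_id tzero tadd.
Proof. by move=> x; apply: tot_ext => p q; rewrite /tadd add0r. Qed.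
Let taddN : left_inverse tzero topp tadd.
Proof. by move=> x; apply: tot_ext => p q; rewrite /tadd addNr. Qed.

HB.instance Definition _ := GRing.isZmodule.Build T taddA taddC tadd0 taddN.

Let tscaleA a b (v : T) : tscale a (tscale b v) = tscale (a * b) v.
Proof. by apply: tot_ext => p q; rewrite /tscale scalerA. Qed.
Let tscale1 : left_id 1 tscale.
Proof. by move=> x; apply: tot_ext => p q; rewrite /tscale scale1r. Qed.
Let tscaleDr : right_distributive tscale +%R.
Proof. by move=> a x y; apply: tot_ext => p q; rewrite /tscale /= /tadd scalerDr. Qed.
Let tscaleDl (v : T) : {morph tscale^~ v : a b / a + b}.
Proof. by move=> a b; apply: tot_ext => p q; rewrite /tscale /= /tadd scalerDl. Qed.

HB.instance Definition _ := GRing.Zmodule_isLmodule.Build R T tscaleA tscale1 tscaleDr tscaleDl.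

Lemma scale_totE a (x : T) p q : (a *: x) p q = a *: x p q.
Proof. by []. Qed.

Lemma sum_totE I (r : seq I) (P : pred I) (F : I -> T) p q :
  (\sum_(i <- r | P i) F i) p q = \sum_(i <- r | P i) F i p q.
Proof. by elim/big_rec2: _ => // i y1 y2 _ <-. Qed.
End TotalModule.

Section TotalOperators.
Variables (R : comPzRingType) (n : option nat).
Implicit Types (A B : mcx R n).

Definition dtot A (i : nat) (y : tot A) : tot A :=
  fun p q => dd A i (y (p + i%:Z) (q + i%:Z - 1)).
Definition ftot A B (f : mhom A B) (y : tot A) : tot B := fun p q => hf f (y p q).
Definition single A p q (x : A p q) : tot A := fun p' q' => tr p' q' x.
Definition homog A (P Q : int) (y : tot A) := forall p q, ~ (p = P /\ q = Q) -> y p q = 0.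

Lemma dtot_is_linear A i : linear (@dtot A i).
Proof. by move=> a x y; apply: tot_ext => p q; rewrite /dtot /= linearP. Qed.
HB.instance Definition _ A i :=
  GRing.isLinear.Build R (tot A) (tot A) _ (@dtot A i) (@dtot_is_linear A i).

Lemma ftot_is_linear A B (f : mhom A B) : linear (ftot f).
Proof. by move=> a x y; apply: tot_ext => p q; rewrite /ftot /= linearP. Qed.
HB.instance Definition _ A B f :=
  GRing.isLinear.Build R (tot A) (tot B) _ (@ftot A B f) (@ftot_is_linear A B f).

Lemma single_is_linear A p q : linear (@single A p q).
Proof. by move=> a x y; apply: tot_ext => p' q'; rewrite /single /= linearP. Qed.
HB.instance Definition _ A p q :=
  GRing.isLinear.Build R (A p q) (tot A) _ (@single A p q) (@single_is_linear A p q).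

Lemma ftot_dtot A B (f : mhom A B) i (y : tot A) : ftot f (dtot i y) = dtot i (ftot f y).
Proof. by apply: tot_ext => p q; rewrite /ftot /dtot hf_comm. Qed.

Lemma ftot_comp A B C (g : mhom B C) (h : mhom A B) (k : mhom A C) :
  (forall p q (x : A p q), hf g (hf h x) = hf k x) -> forall y, ftot g (ftot h y) = ftot k y.
Proof. by move=> e y; apply: tot_ext => p q; rewrite /ftot e. Qed.

Lemma singleE A p q (x : A p q) : single x p q = x.
Proof. exact: tr_id. Qed.

Lemma single_inj A p q : injective (@single A p q).
Proof. by move=> x y e; rewrite -(singleE x) -(singleE y) e. Qed.

Lemma single_tr A p q p' q' (x : A p q) : p = p' -> q = q' -> single (tr p' q' x) = single x.
Proof. by move=> <- <-; rewrite tr_id. Qed.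

Lemma homog_single A p q (x : A p q) : homog p q (single x).
Proof. by move=> p' q' h; rewrite /single tr_out // => -[e1 e2]; apply: h. Qed.

Lemma homogE A P Q (y : tot A) : homog P Q y -> y = single (y P Q).
Proof.
move=> h; apply: tot_ext => p q.
have [[-> ->]|ne] := lem (p = P /\ q = Q); first by rewrite singleE.
by rewrite h // /single tr_out // => -[e1 e2]; apply: ne.
Qed.

Lemma ftot_single A B (f : mhom A B) p q (x : A p q) : ftot f (single x) = single (hf f x).
Proof. by apply: tot_ext => p' q'; rewrite /ftot /single hf_tr. Qed.

Lemma dtot_single A i p q (x : A p q) :
  dtot i (single x) = fun p' q' => dd A i (p' := p') (q' := q') x.
Proof.
apply: tot_ext => p' q'; rewrite /dtot /single.
have [[e1 e2]|ne] := lem (p = p' + i%:Z /\ q = q' + i%:Z - 1); first by rewrite dd_tr.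
by rewrite tr_out // raddf0 dd_out //; lia.
Qed.

Lemma single_dd A i p q p' q' (x : A p q) : p' = p - i%:Z -> q' = q + 1 - i%:Z ->
  single (dd A i (p' := p') (q' := q') x) = dtot i (single x).
Proof.
move=> e1 e2; rewrite dtot_single; apply: tot_ext => p1 q1; rewrite /single.
have [[<- <-]|ne] := lem (p' = p1 /\ q' = q1); first by rewrite tr_id.
by rewrite tr_out // dd_out //; lia.
Qed.

Lemma homog_cast A P Q P' Q' (y : tot A) : P = P' -> Q = Q' -> homog P Q y -> homog P' Q' y.
Proof. by move=> -> ->. Qed.

Lemma homog_dtot A i P Q (y : tot A) :
  homog P Q y -> homog (P - i%:Z) (Q + 1 - i%:Z) (dtot i y).
Proof. by move=> /homogE ->; rewrite dtot_single => p' q' h; apply: dd_out. Qed.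

Lemma homog0 A P Q : homog P Q (0 : tot A).
Proof. by []. Qed.

Lemma homogD A P Q (x y : tot A) : homog P Q x -> homog P Q y -> homog P Q (x + y).
Proof. by move=> hx hy p q h; rewrite /+%R /= hx // hy // addr0. Qed.

Lemma homogZ A P Q a (x : tot A) : homog P Q x -> homog P Q (a *: x).
Proof. by move=> hx p q h; rewrite scale_totE hx // scaler0. Qed.

Lemma homogN A P Q (x : tot A) : homog P Q x -> homog P Q (- x).
Proof. by move=> hx; rewrite -scaleN1r; apply: homogZ. Qed.

Lemma homogB A P Q (x y : tot A) : homog P Q x -> homog P Q y -> homog P Q (x - y).
Proof. by move=> hx hy; apply: homogD hx (homogN hy). Qed.

Lemma homog_sum A P Q I (r : seq I) (Pr : pred I) (F : I -> tot A) :
  (forall k, Pr k -> homog P Q (F k)) -> homog P Q (\sum_(k <- r | Pr k) F k).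
Proof. by move=> h; elim/big_rec: _ => // k y Pk hy; apply: homogD => //; apply: h. Qed.

Lemma homog_ftot A B (f : mhom A B) P Q (y : tot A) : homog P Q y -> homog P Q (ftot f y).
Proof. by move=> h p q h'; rewrite /ftot h // raddf0. Qed.

Lemma dtot_rel A N (y : tot A) :
  \sum_(a < N.+1) (-1) ^+ a *: dtot a (dtot (N - a) y) = 0.
Proof.
apply: tot_ext => p q.
rewrite -[RHS](dd_rel A N (p + N%:Z) (q + N%:Z - 2) p q (y (p + N%:Z) (q + N%:Z - 2))).
rewrite sum_totE; apply: eq_bigr => a _; rewrite scale_totE /dtot; congr (_ *: _).
have := ltn_ord a; move: (nat_of_ord a) => b hb.
have cong P1 Q1 M1 N1 P2 Q2 M2 N2 : P1 = P2 -> Q1 = Q2 -> M1 = M2 -> N1 = N2 ->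
    dd A b (p' := p) (q' := q) (dd A (N - b) (p' := M1) (q' := N1) (y P1 Q1)) =
    dd A b (p' := p) (q' := q) (dd A (N - b) (p' := M2) (q' := N2) (y P2 Q2)).
  by move=> -> -> -> ->.
by apply: cong; lia.
Qed.
End TotalOperators.

(** * Chains *)

Lemma sign_parity (R : pzRingType) (x y c : nat) : x = (y + c + c)%N -> (-1) ^+ x = (-1) ^+ y :> R.
Proof. by move->; rewrite -addnA addnn -muln2 exprD exprM sqrr_sign mulr1. Qed.

Lemma sum_triangle (V : zmodType) (F : nat -> nat -> V) N :
  \sum_(0 <= m < N) \sum_(0 <= k < N - m) F m k =
  \sum_(0 <= t < N) \sum_(0 <= m < t.+1) F m (t - m)%N.
Proof.
elim: N => [|N IH]; first by rewrite !big_geq.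
rewrite big_nat_recr //= [RHS]big_nat_recr //= -IH.
rewrite [X in _ = _ + X]big_nat_recr //= subnn.
have -> : \sum_(0 <= m < N) \sum_(0 <= k < N.+1 - m) F m k =
          \sum_(0 <= m < N) (\sum_(0 <= k < N - m) F m k + F m (N - m)%N).
  by apply: eq_big_nat => m /andP [_ hm]; rewrite subSn ?(ltnW hm) // big_nat_recr.
by rewrite big_split /= subSnn big_nat1 -!addrA.
Qed.

Section Relations.
Variables (R : comPzRingType) (n : option nat) (A : mcx R n).
Implicit Types (al b g : nat -> tot A).

Definition zrelT al l : tot A := \sum_(j < l.+1) (-1) ^+ (l - j) *: dtot (l - j) (al j).

Definition chain k P Q al :=
  (forall j, homog (P - j%:Z) (Q - j%:Z) (al j)) /\ (forall l, (l < k)%N -> zrelT al l = 0).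

Definition shiftup g (j : nat) : tot A := if j is j'.+1 then g j' else 0.

(* The image under iota_s of the generator a_j, in terms of the b_m (with e = b_{s-1})
   and of the c_m; [iota_b] is the part not involving the c_m. *)
Definition iota_bsum s b (j : nat) : tot A :=
  (-1) ^+ j *: \sum_(j.+1 <= k < s + j) (-1) ^+ k *: dtot k (b (s + j - 1 - k)%N).
Definition iota_b s b (j : nat) : tot A := dtot j (b s.-1) + iota_bsum s b j.
Definition iota_tot s b g (j : nat) : tot A := iota_b s b j + shiftup g j.

Lemma zrelT_nat al l : zrelT al l = \sum_(0 <= j < l.+1) (-1) ^+ (l - j) *: dtot (l - j) (al j).
Proof. by rewrite /zrelT big_mkord. Qed.

Lemma zrelT_rev al l : zrelT al l = \sum_(i < l.+1) (-1) ^+ i *: dtot i (al (l - i)%N).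
Proof.
rewrite zrelT_nat big_nat_rev -(big_mkord xpredT (fun i => (-1) ^+ i *: dtot i (al (l - i)%N))).
by apply: eq_big_nat => j /andP [_ hj]; rewrite add0n subSS (_ : (l - (l - j) = j)%N) //; lia.
Qed.

Lemma zrelT_eq al al' l : (forall j, (j <= l)%N -> al j = al' j) -> zrelT al l = zrelT al' l.
Proof. by move=> h; rewrite !zrelT_nat; apply: eq_big_nat => j /andP [_ hj]; rewrite h. Qed.

Lemma zrelTD al al' l : zrelT (fun j => al j + al' j) l = zrelT al l + zrelT al' l.
Proof. by rewrite /zrelT -big_split; apply: eq_bigr => j _; rewrite raddfD scalerDr. Qed.

Lemma zrelTZ a al l : zrelT (fun j => a *: al j) l = a *: zrelT al l.
Proof. by rewrite /zrelT scaler_sumr; apply: eq_bigr => j _; rewrite linearZ !scalerA mulrC. Qed.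

Lemma zrelTN al l : zrelT (fun j => - al j) l = - zrelT al l.
Proof. by rewrite -scaleN1r -zrelTZ; apply: zrelT_eq => j _; rewrite scaleN1r. Qed.

Lemma zrelTB al al' l : zrelT (fun j => al j - al' j) l = zrelT al l - zrelT al' l.
Proof. by rewrite zrelTD zrelTN. Qed.

Lemma zrelT0 l : zrelT (fun _ => 0) l = 0.
Proof. by rewrite /zrelT big1 // => j _; rewrite raddf0 scaler0. Qed.

Lemma zrelT_shiftup0 g : zrelT (shiftup g) 0 = 0.
Proof. by rewrite /zrelT big_ord1 /= raddf0 scaler0. Qed.

Lemma zrelT_shiftup g l : zrelT (shiftup g) l.+1 = zrelT g l.
Proof.
rewrite /zrelT big_ord_recl /= raddf0 scaler0 add0r.
by apply: eq_bigr => j _; rewrite subSS.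
Qed.

(* Relation l of the family (D_{c+j} y)_j, by the structure equation in total degree l + c. *)
Lemma zrelT_dtot c l (y : tot A) :
  \sum_(0 <= j < l.+1) (-1) ^+ (l - j) *: dtot (l - j) (dtot (c + j) y) =
  - \sum_(0 <= k < c) (-1) ^+ (l + c - k) *: dtot (l + c - k) (dtot k y).
Proof.
have h : \sum_(0 <= a < (l + c).+1) (-1) ^+ a *: dtot a (dtot (l + c - a) y) = 0.
  by rewrite big_mkord; exact: dtot_rel.
rewrite (big_cat_nat _ (n := l.+1)) //= in h; last by lia.
apply/eqP; rewrite -addr_eq0; apply/eqP; rewrite -[RHS]h; congr (_ + _).
  rewrite big_nat_rev /=; apply: eq_big_nat => j /andP [_ hj].
  rewrite add0n subSS (_ : (l - (l - j) = j)%N); last by lia.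
  by rewrite (_ : (c + (l - j) = l + c - j)%N) //; lia.
rewrite (_ : l.+1 = 0 + l.+1)%N // big_addn (_ : ((l + c).+1 - (0 + l.+1) = c)%N); last by lia.
rewrite [RHS]big_nat_rev /=; apply: eq_big_nat => k /andP [_ hk].
rewrite add0n (_ : (c - k.+1 + l.+1 = l + c - k)%N); last by lia.
by rewrite (_ : (l + c - (l + c - k) = k)%N) //; lia.
Qed.

Lemma zrelT_const (y : tot A) l : zrelT (fun j => dtot j y) l = 0.
Proof. by rewrite zrelT_nat (zrelT_dtot 0 l y) big_geq // oppr0. Qed.

Lemma iota_bsumE s b j : iota_bsum s b j =
  \sum_(0 <= m < s.-1) (-1) ^+ (s.-1 - m) *: dtot (s.-1 - m + j) (b m).
Proof.
rewrite /iota_bsum scaler_sumr -{1}[j.+1]add0n big_addn.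
rewrite (_ : (s + j - j.+1 = s.-1)%N); last by lia.
rewrite big_nat_rev /=; apply: eq_big_nat => m /andP [_ hm].
rewrite add0n scalerA -exprD (_ : (s.-1 - m.+1 + j.+1 = s.-1 - m + j)%N); last by lia.
rewrite (_ : (s + j - 1 - (s.-1 - m + j) = m)%N); last by lia.
by rewrite (@sign_parity _ _ (s.-1 - m) j) //; lia.
Qed.

Lemma zrelT_iota_bsum s b l :
  (forall t, (t < s.-1)%N -> zrelT b t = 0) -> zrelT (iota_bsum s b) l = 0.
Proof.
move=> hb; set N := s.-1.
have -> : zrelT (iota_bsum s b) l =
  \sum_(0 <= m < N) (-1) ^+ (N - m) *:
     \sum_(0 <= j < l.+1) (-1) ^+ (l - j) *: dtot (l - j) (dtot ((N - m) + j) (b m)).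
  rewrite zrelT_nat.
  under eq_bigr => j _ do rewrite iota_bsumE linear_sum scaler_sumr.
  rewrite exchange_big /=; apply: eq_bigr => m _; rewrite scaler_sumr.
  by apply: eq_bigr => j _; rewrite linearZ !scalerA mulrC.
under eq_bigr => m _ do rewrite zrelT_dtot scalerN scaler_sumr.
rewrite sumrN (sum_triangle (fun m k : nat => (-1) ^+ (N - m) *: ((-1) ^+ (l + (N - m) - k) *:
                dtot (l + (N - m) - k) (dtot k (b m)))) N).
rewrite big_nat_cond big1 ?oppr0 // => t /andP [/andP [_ ht] _].
have -> : \sum_(0 <= m < t.+1) (-1) ^+ (N - m) *: ((-1) ^+ (l + (N - m) - (t - m)) *:
                dtot (l + (N - m) - (t - m)) (dtot (t - m) (b m))) =
          (-1) ^+ l *: dtot (l + N - t) (zrelT b t).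
  rewrite zrelT_nat linear_sum scaler_sumr; apply: eq_big_nat => m /andP [_ hm].
  rewrite [in RHS]linearZ !scalerA -!exprD (_ : (l + (N - m) - (t - m) = l + N - t)%N); last by lia.
  by rewrite (@sign_parity _ _ (l + (t - m)) (N - t)) //; lia.
by rewrite hb // raddf0 scaler0.
Qed.

Lemma zrelT_iota_b s b l : (forall t, (t < s.-1)%N -> zrelT b t = 0) -> zrelT (iota_b s b) l = 0.
Proof.
move=> hb; rewrite /iota_b (zrelTD (fun j => dtot j (b s.-1)) (iota_bsum s b)).
by rewrite zrelT_const zrelT_iota_bsum // addr0.
Qed.

Lemma iota_b0 r b : iota_b r.+1 b 0 = zrelT b r.
Proof.
rewrite /iota_b iota_bsumE zrelT_nat big_nat_recr //= subnn addrC expr0 scale1r.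
by congr (_ + _); apply: eq_big_nat => m _; rewrite addn0.
Qed.

Lemma iota_tot0 r b g : iota_tot r.+1 b g 0 = zrelT b r.
Proof. by rewrite /iota_tot iota_b0 addr0. Qed.

Lemma iota_b_eq r b b' j : (forall m, (m < r.+1)%N -> b m = b' m) ->
  iota_b r.+1 b j = iota_b r.+1 b' j.
Proof.
move=> h; rewrite /iota_b /iota_bsum /= h //; congr (_ + _ *: _).
by apply: eq_big_nat => k /andP [h1 h2]; rewrite h //; lia.
Qed.

Lemma iota_tot_eq r b b' g g' j :
  (forall m, (m < r.+1)%N -> b m = b' m) -> (forall m, (m < r)%N -> g m = g' m) ->
  (j < r.+1)%N -> iota_tot r.+1 b g j = iota_tot r.+1 b' g' j.
Proof.
move=> hb hg hj; rewrite /iota_tot (iota_b_eq _ hb).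
by case: j hj => [|j] hj //=; rewrite hg.
Qed.
End Relations.

Section Chains.
Variables (R : comPzRingType) (n : option nat).
Implicit Types (A B : mcx R n).

Lemma ftot_zrelT A B (f : mhom A B) al l : ftot f (zrelT al l) = zrelT (fun j => ftot f (al j)) l.
Proof. by rewrite /zrelT linear_sum; apply: eq_bigr => j _; rewrite linearZ /= ftot_dtot. Qed.

Lemma ftot_iota_b A B (f : mhom A B) s b j :
  ftot f (iota_b s b j) = iota_b s (fun m => ftot f (b m)) j.
Proof.
rewrite /iota_b /iota_bsum raddfD /= linearZ /= linear_sum /= ftot_dtot.
by congr (_ + _ *: _); apply: eq_bigr => k _; rewrite linearZ /= ftot_dtot.
Qed.

Lemma ftot_iota_tot A B (f : mhom A B) s b g j :
  ftot f (iota_tot s b g j) = iota_tot s (fun m => ftot f (b m)) (fun m => ftot f (g m)) j.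
Proof. by rewrite /iota_tot raddfD /= ftot_iota_b; case: j => [|j] //=; rewrite raddf0. Qed.

Lemma homog_iota_b A r (b : nat -> tot A) p q j :
  (forall m, (m < r.+1)%N -> homog (p + r.+1%:Z - 1 - m%:Z) (q + r.+1%:Z - 2 - m%:Z) (b m)) ->
  homog (p - j%:Z) (q - j%:Z) (iota_b r.+1 b j).
Proof.
move=> h; apply: homogD; first by apply: (homog_cast _ _ (homog_dtot (h r (ltnSn r)))); lia.
apply: homogZ; rewrite big_nat_cond; apply: homog_sum => k /andP [/andP [h1 h2] _].
by apply: homogZ; apply: (homog_cast _ _ (homog_dtot (h _ _))); lia.
Qed.

Lemma chain_cast A k P Q P' Q' (al : nat -> tot A) :
  P = P' -> Q = Q' -> chain k P Q al -> chain k P' Q' al.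
Proof. by move=> -> ->. Qed.

Lemma chainD A k P Q (al be : nat -> tot A) :
  chain k P Q al -> chain k P Q be -> chain k P Q (fun j => al j + be j).
Proof.
move=> [s1 d1] [s2 d2]; split=> [j|l hl]; first exact: homogD.
by rewrite zrelTD d1 ?d2 ?addr0.
Qed.

Lemma chainN A k P Q (al : nat -> tot A) : chain k P Q al -> chain k P Q (fun j => - al j).
Proof.
move=> [s1 d1]; split=> [j|l hl]; first exact: homogN.
by rewrite zrelTN d1 ?oppr0.
Qed.

Lemma chainB A k P Q (al be : nat -> tot A) :
  chain k P Q al -> chain k P Q be -> chain k P Q (fun j => al j - be j).
Proof. by move=> h1 h2; apply: chainD h1 (chainN h2). Qed.

Lemma chain0 A k P Q : chain k P Q (fun _ => 0 : tot A).
Proof. by split=> [j|l _]; [exact: homog0 | exact: zrelT0]. Qed.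

Lemma chain_le A k k' P Q (al : nat -> tot A) : (k' <= k)%N -> chain k P Q al -> chain k' P Q al.
Proof. by move=> hk [s1 d1]; split=> // l hl; apply: d1; apply: leq_trans hl hk. Qed.

Lemma chain_trunc A k P Q (al be : nat -> tot A) : chain k P Q al ->
  (forall j, homog (P - j%:Z) (Q - j%:Z) (be j)) -> (forall j, (j < k)%N -> al j = be j) ->
  chain k P Q be.
Proof.
move=> [s1 d1] s2 h; split=> // l hl; rewrite -(d1 l hl); apply: zrelT_eq => j hj.
by rewrite h //; apply: leq_ltn_trans hj hl.
Qed.

Lemma ftot_chain A B (f : mhom A B) k P Q (al : nat -> tot A) :
  chain k P Q al -> chain k P Q (fun j => ftot f (al j)).
Proof.
move=> [s1 d1]; split=> [j|l hl]; first exact: homog_ftot.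
by rewrite -ftot_zrelT d1 // raddf0.
Qed.

Lemma chain_shiftup A k P Q (g : nat -> tot A) :
  chain k (P - 1) (Q - 1) g -> chain k.+1 P Q (shiftup g).
Proof.
move=> [s1 d1]; split=> [[|j]|[|l] hl] /=.
- exact: homog0.
- by apply: (homog_cast _ _ (s1 j)); lia.
- exact: zrelT_shiftup0.
- by rewrite zrelT_shiftup d1.
Qed.

Lemma chain_shiftdown A k P Q (al : nat -> tot A) :
  chain k.+1 P Q al -> al 0%N = 0 -> chain k (P - 1) (Q - 1) (fun j => al j.+1).
Proof.
move=> [s1 d1] h0; split=> [j|l hl]; first by apply: (homog_cast _ _ (s1 j.+1)); lia.
rewrite -zrelT_shiftup -(d1 l.+1 hl).
by apply: zrelT_eq => -[|j] _ /=; rewrite ?h0.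
Qed.

Lemma chain_const A k P Q (y : tot A) : homog P (Q - 1) y -> chain k P Q (fun j => dtot j y).
Proof.
move=> h; split=> [j|l _]; last exact: zrelT_const.
by apply: (homog_cast _ _ (homog_dtot h)); lia.
Qed.

Lemma chain_iota_b A k r p q (b : nat -> tot A) :
  chain r (p + r.+1%:Z - 1) (q + r.+1%:Z - 2) b -> chain k p q (iota_b r.+1 b).
Proof. by move=> [hs hd]; split=> [j|l _]; [exact: homog_iota_b | exact: zrelT_iota_b]. Qed.

Lemma chain_iota_tot A r p q (b g : nat -> tot A) :
  chain r (p + r.+1%:Z - 1) (q + r.+1%:Z - 2) b -> chain r (p - 1) (q - 1) g ->
  chain r.+1 p q (iota_tot r.+1 b g).
Proof. by move=> hb hg; apply: chainD (chain_iota_b _ hb) (chain_shiftup hg). Qed.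

Lemma chain_head A k P Q (al : nat -> tot A) : chain k P Q al -> al 0%N = single (al 0%N P Q).
Proof. by move=> [s1 _]; apply: homogE; apply: (homog_cast _ _ (s1 0%N)); lia. Qed.

(** * Z_r and B_r in terms of chains *)

Lemma zrelT_single A P Q (a : forall j : nat, A (P - j%:Z) (Q - j%:Z)) l :
  zrelT (fun j => single (a j)) l =
  fun p' q' => \sum_(j < l.+1) (-1) ^+ (l - j) *: dd A (l - j) (p' := p') (q' := q') (a j).
Proof.
apply: tot_ext => p' q'.
by rewrite /zrelT sum_totE; apply: eq_bigr => j _; rewrite scale_totE dtot_single.
Qed.

Lemma zrel_zrelT A P Q (a : forall j : nat, A (P - j%:Z) (Q - j%:Z)) l :
  zrel a l <-> zrelT (fun j => single (a j)) l = 0.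
Proof.
rewrite zrelT_single; split=> [h|/(congr1 (fun F => F (P - l%:Z) (Q - l%:Z + 1))) //].
apply: tot_ext => p' q'; have [[-> ->]|ne] := lem (p' = P - l%:Z /\ q' = Q - l%:Z + 1) => //.
by rewrite big1 // => j _; rewrite dd_out ?scaler0 //; have := ltn_ord j; lia.
Qed.

Lemma chain_single A k P Q (a : forall j : nat, A (P - j%:Z) (Q - j%:Z)) :
  (forall l, (l < k)%N -> zrel a l) -> chain k P Q (fun j => single (a j)).
Proof. by move=> h; split=> [j|l hl]; [exact: homog_single | apply/zrel_zrelT; exact: h]. Qed.

Lemma chain_components A k P Q (al : nat -> tot A) : chain k P Q al ->
  exists2 a : forall j : nat, A (P - j%:Z) (Q - j%:Z),
    forall j, single (a j) = al j & forall l, (l < k)%N -> zrel a l.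
Proof.
move=> [s1 d1]; exists (fun j => al j (P - j%:Z) (Q - j%:Z)) => [j|l hl].
  by rewrite -homogE.
by apply/zrel_zrelT; rewrite -(d1 l hl); apply: zrelT_eq => j _; rewrite -homogE.
Qed.

Lemma ZrE A r p q (z : A p q) :
  Zr r.+1 z <-> exists2 al, chain r.+1 p q al & al 0%N = single z.
Proof.
split=> [[a [<- h]]|[al hal h0]].
  by exists (fun j => single (a j)); [exact: chain_single | rewrite single_tr //; lia].
have [a ea za] := chain_components hal; exists a; split=> //.
by apply: single_inj; rewrite single_tr ?ea //; lia.
Qed.

Lemma single_zrel_rev A P Q (b : forall k : nat, A (P - k%:Z) (Q - k%:Z)) l X Y :
  X = P - l%:Z -> Y = Q - l%:Z + 1 ->
  single (\sum_(i < l.+1) (-1) ^+ i *: dd A i (p' := X) (q' := Y) (b (l - i)%N)) =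
  zrelT (fun j => single (b j)) l.
Proof.
move=> eX eY; rewrite zrelT_rev linear_sum; apply: eq_bigr => i _.
by rewrite linearZ /= single_dd //; have := ltn_ord i; lia.
Qed.

Lemma zrel_rev A P Q (b : forall k : nat, A (P - k%:Z) (Q - k%:Z)) l X Y :
  X = P - l%:Z -> Y = Q - l%:Z + 1 ->
  \sum_(i < l.+1) (-1) ^+ i *: dd A i (p' := X) (q' := Y) (b (l - i)%N) = 0 <-> zrel b l.
Proof.
move=> eX eY; rewrite zrel_zrelT -(single_zrel_rev b eX eY).
by split=> [->|h]; [rewrite raddf0 | apply: single_inj; rewrite h raddf0].
Qed.

Lemma BrE A r p q (z : A p q) :
  Br r.+1 z <-> exists2 b, chain r (p + r.+1%:Z - 1) (q + r.+1%:Z - 2) b & single z = zrelT b r.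
Proof.
have zrelT_0 (b : nat -> tot A) : zrelT b 0 = dtot 0 (b 0%N) by rewrite /zrelT big_ord1 scale1r.
case: r => [|r].
  split=> [[b0 ->]|[b [hb _] hz]].
    exists (fun j => if j == 0%N then single b0 else 0); last by rewrite zrelT_0 single_dd //; lia.
    by split=> [[|j]|//]; [apply: (homog_cast _ _ (homog_single b0)); lia | exact: homog0].
  have hb0 : homog p (q - 1) (b 0%N) by apply: (homog_cast _ _ (hb 0%N)); lia.
  exists (b 0%N p (q - 1)); apply: single_inj.
  by rewrite hz zrelT_0 {1}(homogE hb0) single_dd //; lia.
split=> [[b [-> hb]]|[be hbe hz]].
  exists (fun j => single (b j)); last by rewrite (single_zrel_rev b) //; lia.
  by apply: chain_single => l hl; apply: (zrel_rev b _ _).1 (hb l _); lia.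
have [b eb zb] := chain_components hbe; exists b; split.
  apply: single_inj; rewrite hz (single_zrel_rev b); [|lia|lia].
  by apply: zrelT_eq => j _; rewrite eb.
by move=> l hl; apply: (zrel_rev b _ _).2 (zb l _); lia.
Qed.
End Chains.

Section ChainLifting.
Variables (R : comPzRingType) (n : option nat) (A B : mcx R n) (f : mhom A B).

Definition lifts_chains k := forall P Q (be : nat -> tot B), chain k P Q be ->
  exists2 al : nat -> tot A, chain k P Q al & forall j, (j < maxn k 1)%N -> ftot f (al j) = be j.

Definition lifts_iota r := forall p q (al : nat -> tot A) (b g : nat -> tot B),
  chain r.+1 p q al ->
  chain r (p + r.+1%:Z - 1) (q + r.+1%:Z - 2) b ->
  chain r (p - 1) (q - 1) g ->
  (forall j, (j < r.+1)%N -> ftot f (al j) = iota_tot r.+1 b g j) ->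
  exists (b' g' : nat -> tot A),
    [/\ chain r (p + r.+1%:Z - 1) (q + r.+1%:Z - 2) b', chain r (p - 1) (q - 1) g',
        forall j, (j < r.+1)%N -> ftot f (b' j) = b j, forall j, (j < r)%N -> ftot f (g' j) = g j
      & forall j, (j < r.+1)%N -> al j = iota_tot r.+1 b' g' j].

(* An r-chain has r + 1 terms but only r relations, so its last term is lifted on its own. *)
Lemma lift_chain_terms r : lifts_chains 0 -> lifts_chains r ->
  forall P Q (be : nat -> tot B), chain r P Q be ->
  exists2 al, chain r P Q al & forall j, (j < r.+1)%N -> ftot f (al j) = be j.
Proof.
move=> hJ0 hJr P Q be hbe; have [al1 hal1 fal1] := hJr _ _ _ hbe.
have hlast : chain 0 (P - r%:Z) (Q - r%:Z) (fun j => if j == 0%N then be r else 0).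
  by split=> [[|j]|//]; [apply: (homog_cast _ _ (hbe.1 r)); lia | exact: homog0].
have [om hom fom] := hJ0 _ _ _ hlast.
exists (fun j => if (j < r)%N then al1 j else if j == r then om 0%N else 0).
  apply: (chain_trunc hal1) => [j|j ->//].
  case: ifP => _; first exact: hal1.1.
  case: eqP => [->|_]; last exact: homog0.
  by apply: (homog_cast _ _ (hom.1 0%N)); lia.
move=> j hj; case: ifP => hjr; first by apply: fal1; lia.
have -> : j = r by lia.
by rewrite eqxx fom.
Qed.

Lemma lifts_chains_succ r : Eqi r f -> lifts_chains 0 -> lifts_chains r -> lifts_chains r.+1.
Proof.
move=> hE hJ0 hJr P Q be hbe.
have be0E := chain_head hbe.
have hz : Zr r.+1 (be 0%N P Q) by apply/ZrE; exists be.
have [z' [/ZrE [zc hzc zc0] /BrE [w hw hwz]]] := (hE P Q).1 _ hz.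
have [w' hw' fw'] := lift_chain_terms hJ0 hJr hw.
pose ze j := zc j - iota_b r.+1 w' j.
have hze : chain r.+1 P Q ze by apply: (chainB hzc); apply: chain_iota_b.
have fze0 : ftot f (ze 0%N) = be 0%N.
  rewrite raddfB /= ftot_iota_b iota_b0 zc0 ftot_single (zrelT_eq (al' := w)) // -hwz.
  by rewrite raddfB /= opprB addrC subrK -be0E.
pose et j := be j - ftot f (ze j).
have het : chain r.+1 P Q et := chainB hbe (ftot_chain f hze).
have het0 : et 0%N = 0 by rewrite /et fze0 subrr.
have [e2 he2 fe2] := hJr _ _ _ (chain_shiftdown het het0).
exists (fun j => ze j + shiftup e2 j); first exact: chainD hze (chain_shiftup he2).
move=> j hj; rewrite raddfD /=; case: j hj => [|j] hj /=; first by rewrite raddf0 addr0 fze0.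
rewrite fe2; last by lia.
by rewrite /et addrC subrK.
Qed.

(* Injectivity of E_{r+1}(f) bounds the head of al by an r-chain of A; lifting the difference
   with the bounding chain in B corrects its image. *)
Lemma lift_bounding_chain r : Eqi r f -> lifts_chains r.+1 ->
  forall p q (al : nat -> tot A) (b : nat -> tot B),
  chain r.+1 p q al -> chain r (p + r.+1%:Z - 1) (q + r.+1%:Z - 2) b ->
  ftot f (al 0%N) = zrelT b r ->
  exists2 b', chain r (p + r.+1%:Z - 1) (q + r.+1%:Z - 2) b' &
    zrelT b' r = al 0%N /\ forall j, (j < r.+1)%N -> ftot f (b' j) = b j.
Proof.
move=> hE hJs p q al b hal hb fal0.
have al0E := chain_head hal.
have hz : Zr r.+1 (al 0%N p q) by apply/ZrE; exists al.
have hbz : Br r.+1 (hf f (al 0%N p q)).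
  by apply/BrE; exists b => //; rewrite -fal0 [in RHS]al0E ftot_single.
have [a ha haz] := (BrE _ _).1 ((hE p q).2 _ hz hbz).
pose dl j := b j - ftot f (a j).
have hdl : chain r.+1 (p + r.+1%:Z - 1) (q + r.+1%:Z - 2) dl.
  split=> [j|l hl]; first by apply: homogB; [exact: hb.1 | apply: homog_ftot; exact: ha.1].
  rewrite zrelTB -ftot_zrelT; have [hlr|->] : (l < r)%N \/ l = r by lia.
    by rewrite hb.2 // ha.2 // raddf0 subrr.
  by rewrite -haz -al0E fal0 subrr.
have [th hth fth] := hJs _ _ _ hdl.
exists (fun j => a j + th j); first exact: chainD ha (chain_le (leqnSn r) hth).
split; first by rewrite zrelTD (hth.2 r (ltnSn r)) addr0 -haz -al0E.
by move=> j hj; rewrite raddfD /= fth // /dl addrC subrK.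
Qed.

Lemma lifts_iota_of_Eqi r : Eqi r f -> lifts_chains 0 -> lifts_chains r -> lifts_iota r.
Proof.
move=> hE hJ0 hJr p q al b g hal hb hg hF.
have fal0 : ftot f (al 0%N) = zrelT b r by rewrite hF // iota_tot0.
have [b' hb' [zb' fb']] := lift_bounding_chain hE (lifts_chains_succ hE hJ0 hJr) hal hb fal0.
have hsd : chain r.+1 p q (fun j => al j - iota_b r.+1 b' j).
  by apply: (chainB hal); apply: chain_iota_b.
have hsd0 : al 0%N - iota_b r.+1 b' 0 = 0 by rewrite iota_b0 zb' subrr.
exists b', (fun j => al j.+1 - iota_b r.+1 b' j.+1); split=> //.
- exact: (chain_shiftdown hsd hsd0).
- move=> j hj; rewrite raddfB /= ftot_iota_b hF // /iota_tot (iota_b_eq _ fb') /=.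
  by rewrite addrC addKr.
- move=> [|j] hj; first by rewrite iota_tot0 zb'.
  by rewrite /iota_tot /= addrC subrK.
Qed.

(* An (r+1)-chain be of B is the b-part of an iota-lifting problem for al = 0; the lift b'
   of be then satisfies its (r+1)-st relation because zrelT b' r = al 0 = 0. *)
Lemma lifts_chains_succ_of_lifts_iota r : lifts_iota r -> lifts_chains r.+1.
Proof.
move=> hI P Q be hbe.
have hb : chain r ((P - r%:Z) + r.+1%:Z - 1) ((Q - r%:Z + 1) + r.+1%:Z - 2) be.
  by apply: (chain_cast _ _ (chain_le (leqnSn r) hbe)); lia.
have hPs : chain r.+1 (P - r%:Z) (Q - r%:Z + 1) (fun j => - iota_b r.+1 be j).
  by apply/chainN/chain_iota_b.
have hPs0 : - iota_b r.+1 be 0 = 0 by rewrite iota_b0 (hbe.2 r (ltnSn r)) oppr0.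
have hF j : (j < r.+1)%N ->
    ftot f ((fun _ => 0 : tot A) j) = iota_tot r.+1 be (fun j => - iota_b r.+1 be j.+1) j.
  rewrite raddf0; case: j => [|j] _; first by rewrite iota_tot0 hbe.2.
  by rewrite /iota_tot /= subrr.
have [b' [g' [hb' _ fb' _ h0]]] :=
  hI _ _ _ _ _ (chain0 _ _ _ _) hb (chain_shiftdown hPs hPs0) hF.
exists b'; last by move=> j hj; apply: fb'; lia.
split=> [j|l hl]; first by apply: (homog_cast _ _ (hb'.1 j)); lia.
have [hlr|->] : (l < r)%N \/ l = r by lia.
  exact: hb'.2.
by have := h0 0%N isT; rewrite iota_tot0.
Qed.

(* A single element y of B is the e-part of an iota-lifting problem, against a lift of the
   chain (D_j y)_j. *)
Lemma lifts_chains0_of_lifts_iota r : lifts_iota r -> lifts_chains 0.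
Proof.
move=> hI P Q be [hbe _].
pose y := be 0%N.
have hy : homog P (Q + 1 - 1) y by apply: (homog_cast _ _ (hbe 0%N)); lia.
have [al hal fal] := lifts_chains_succ_of_lifts_iota hI (chain_const r.+1 hy).
pose b j := if j == r then y else 0.
have hb : chain r (P + r.+1%:Z - 1) (Q + 1 + r.+1%:Z - 2) b.
  split=> [j|l hl].
    by rewrite /b; case: eqP => [->|_]; [apply: (homog_cast _ _ hy); lia | exact: homog0].
  by rewrite (zrelT_eq (al' := fun _ => 0)) ?zrelT0 // => j hj; rewrite /b ifF //; lia.
have hF j : (j < r.+1)%N -> ftot f (al j) = iota_tot r.+1 b (fun _ => 0) j.
  move=> hj; rewrite fal; last by lia.
  have hS : iota_bsum r.+1 b j = 0.
    rewrite iota_bsumE big_nat_cond big1 // => m /andP [/andP [_ hm] _].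
    by rewrite /b ifF ?raddf0 ?scaler0 //; lia.
  by rewrite /iota_tot /iota_b hS /b eqxx addr0; case: j {hj hS} => [|j] /=; rewrite addr0.
have [b' [g' [hb' _ fb' _ _]]] := hI P (Q + 1) al b (fun _ => 0) hal hb (chain0 _ _ _ _) hF.
exists (fun j => if j == 0%N then b' r else 0).
  by split=> [[|j]|//]; [apply: (homog_cast _ _ (hb'.1 r)); lia | exact: homog0].
by move=> [|j] //= _; rewrite fb' // /b eqxx.
Qed.

Lemma lifts_chains_of_lifts_iota r : lifts_iota r -> lifts_chains r.
Proof.
case: r => [|r] hI; first exact: lifts_chains0_of_lifts_iota hI.
move=> P Q y hy.
pose b j := if (j < r.+1)%N then y j else 0.
have hb : chain r.+1 ((P - r.+1%:Z) + r.+2%:Z - 1) ((Q - r.+1%:Z + 1) + r.+2%:Z - 2) b.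
  apply: (chain_cast _ _ (chain_trunc hy _ _)) => [||j|j hj]; try lia.
    by rewrite /b; case: ifP => _; [exact: hy.1 | exact: homog0].
  by rewrite /b hj.
have [al hal fal] := lifts_chains_succ_of_lifts_iota hI (chain_iota_b r.+2 hb).
have hF j : (j < r.+2)%N -> ftot f (al j) = iota_tot r.+2 b (fun _ => 0) j.
  move=> hj; rewrite fal; last by lia.
  by rewrite /iota_tot; case: j {hj} => [|j] /=; rewrite addr0.
have [b' [g' [hb' _ fb' _ _]]] := hI _ _ al b (fun _ => 0) hal hb (chain0 _ _ _ _) hF.
exists b'; first by apply: (chain_cast _ _ hb'); lia.
move=> j hj; rewrite fb' /b; last by lia.
by case: ifP => //; lia.
Qed.

Lemma Eqi_of_lifts_iota r : lifts_iota r -> Eqi r f.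
Proof.
move=> hI p q; have hJs := lifts_chains_succ_of_lifts_iota hI; split.
  move=> z /ZrE [be hbe be0]; have [al hal fal] := hJs _ _ _ hbe.
  exists (al 0%N p q); split; first by apply/ZrE; exists al => //; exact: chain_head hal.
  apply/BrE; exists (fun _ => 0); first exact: chain0.
  by rewrite zrelT0 raddfB /= -ftot_single -(chain_head hal) fal // be0 subrr.
move=> z /ZrE [al hal al0] /BrE [b hb hbz].
have hsd : chain r.+1 p q (fun j => ftot f (al j) - iota_b r.+1 b j).
  by apply: (chainB (ftot_chain f hal)); apply: chain_iota_b.
have hsd0 : ftot f (al 0%N) - iota_b r.+1 b 0 = 0.
  by rewrite iota_b0 al0 ftot_single hbz subrr.
have hF j : (j < r.+1)%N ->
    ftot f (al j) = iota_tot r.+1 b (fun j => ftot f (al j.+1) - iota_b r.+1 b j.+1) j.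
  case: j => [|j] _; last by rewrite /iota_tot /= addrC subrK.
  by rewrite iota_tot0 -iota_b0; apply/eqP; rewrite -subr_eq0 hsd0.
have [b' [g' [hb' _ _ _ h0]]] := hI p q al b _ hal hb (chain_shiftdown hsd hsd0) hF.
by apply/BrE; exists b' => //; rewrite -al0 h0 // iota_tot0.
Qed.
End ChainLifting.

(** * Free multicomplexes *)

(* The multicomplex generated by generators g in bidegree (gp g, gq g), subject to the
   relations Val: terms modulo equality under every valuation satisfying Val. *)
Section Free.
Variables (R : comPzRingType) (n : option nat) (G : Type) (gp gq : G -> int)
  (Val : forall C : mcx R n, (forall g, C (gp g) (gq g)) -> Prop).

Inductive fterm : int -> int -> Type :=
| FTgen (g : G) : fterm (gp g) (gq g)
| FTzero p q : fterm p q
| FTadd p q : fterm p q -> fterm p q -> fterm p q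
| FTscale p q : R -> fterm p q -> fterm p q
| FTdd (i : nat) p q p' q' : fterm p q -> fterm p' q'.

Fixpoint fteval (C : mcx R n) (c : forall g, C (gp g) (gq g)) p q (t : fterm p q) : C p q :=
  match t in fterm p q return C p q with
  | FTgen g => c g
  | FTzero _ _ => 0
  | FTadd _ _ t1 t2 => fteval c t1 + fteval c t2
  | FTscale _ _ a t1 => a *: fteval c t1
  | FTdd i _ _ _ _ t1 => dd C i (fteval c t1)
  end.

Definition fterm_eqv p q (t1 t2 : fterm p q) : Prop :=
  forall (C : mcx R n) (c : forall g, C (gp g) (gq g)), Val c -> fteval c t1 = fteval c t2.

Definition fmod p q := { S : fterm p q -> Prop | exists t, S = fterm_eqv t }.
Definition fclass p q (t : fterm p q) : fmod p q := exist _ (fterm_eqv t) (ex_intro _ t erefl).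
Definition frepr p q (x : fmod p q) : fterm p q := proj1_sig (cid (proj2_sig x)).

Definition fmod_eval (C : mcx R n) (c : forall g, C (gp g) (gq g)) p q (x : fmod p q) : C p q :=
  fteval c (frepr x).

Lemma frepr_class p q (x : fmod p q) : fclass (frepr x) = x.
Proof.
case: x => S pS; apply: eq_exist; rewrite /frepr /=.
by case: cid => t /= ->.
Qed.

Lemma fclass_eq p q (t1 t2 : fterm p q) : fterm_eqv t1 t2 -> fclass t1 = fclass t2.
Proof.
move=> h; apply: eq_exist; apply: funext => t; apply: propext.
by split=> h1 C c H; [rewrite -(h C c H) (h1 C c H) | rewrite (h C c H) (h1 C c H)].
Qed.

Lemma fmod_eval_class C c (H : Val c) p q (t : fterm p q) :
  fmod_eval (C := C) c (fclass t) = fteval c t.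
Proof.
rewrite /fmod_eval /frepr; case: cid => t' /= e.
have : fterm_eqv t t' by rewrite e.
by move=> /(_ C c H).
Qed.

Lemma fmod_ext p q (x y : fmod p q) :
  (forall (C : mcx R n) (c : forall g, C (gp g) (gq g)), Val c -> fmod_eval c x = fmod_eval c y) ->
  x = y.
Proof. by move=> h; rewrite -(frepr_class x) -(frepr_class y); apply: fclass_eq. Qed.

Section FreeModule.
Variables (p q : int).
Let fadd (x y : fmod p q) := fclass (FTadd (frepr x) (frepr y)).
Let fopp (x : fmod p q) := fclass (FTscale (-1) (frepr x)).
Let fzero : fmod p q := fclass (FTzero p q).
Let fscale (a : R) (x : fmod p q) := fclass (FTscale a (frepr x)).

Let evalD C c (H : Val c) x y :
  fmod_eval (C := C) c (fadd x y) = fmod_eval c x + fmod_eval c y.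
Proof. exact: fmod_eval_class. Qed.
Let evalN C c (H : Val c) x : fmod_eval (C := C) c (fopp x) = - fmod_eval c x.
Proof. by rewrite /fopp fmod_eval_class //= scaleN1r. Qed.
Let eval0 C c (H : Val c) : fmod_eval (C := C) c fzero = 0.
Proof. exact: fmod_eval_class. Qed.
Let evalZ C c (H : Val c) a x : fmod_eval (C := C) c (fscale a x) = a *: fmod_eval c x.
Proof. exact: fmod_eval_class. Qed.

HB.instance Definition _ := gen_eqMixin (fmod p q).
HB.instance Definition _ := gen_choiceMixin (fmod p q).

Let faddA : associative fadd.
Proof. by move=> x y z; apply: fmod_ext => C c H; rewrite !evalD // addrA. Qed.
Let faddC : commutative fadd.
Proof. by move=> x y; apply: fmod_ext => C c H; rewrite !evalD // addrC. Qed.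
Let fadd0 : left_id fzero fadd.
Proof. by move=> x; apply: fmod_ext => C c H; rewrite evalD // eval0 // add0r. Qed.
Let faddN : left_inverse fzero fopp fadd.
Proof. by move=> x; apply: fmod_ext => C c H; rewrite evalD // evalN // eval0 // addNr. Qed.
HB.instance Definition _ := GRing.isZmodule.Build (fmod p q) faddA faddC fadd0 faddN.

Let fscaleA a b (v : fmod p q) : fscale a (fscale b v) = fscale (a * b) v.
Proof. by apply: fmod_ext => C c H; rewrite !evalZ // scalerA. Qed.
Let fscale1 : left_id 1 fscale.
Proof. by move=> x; apply: fmod_ext => C c H; rewrite evalZ // scale1r. Qed.
Let fscaleDr : right_distributive fscale +%R.
Proof. by move=> a x y; apply: fmod_ext => C c H; rewrite /= !(evalZ, evalD) // scalerDr. Qed.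
Let fscaleDl (v : fmod p q) : {morph fscale^~ v : a b / a + b}.
Proof. by move=> a b; apply: fmod_ext => C c H; rewrite /= !(evalZ, evalD) // scalerDl. Qed.
HB.instance Definition _ :=
  GRing.Zmodule_isLmodule.Build R (fmod p q) fscaleA fscale1 fscaleDr fscaleDl.

Section Eval.
Variables (C : mcx R n) (c : forall g, C (gp g) (gq g)) (H : Val c).

Lemma fmod_evalD (x y : fmod p q) : fmod_eval c (x + y) = fmod_eval c x + fmod_eval c y.
Proof. exact: evalD. Qed.
Lemma fmod_evalZ a (x : fmod p q) : fmod_eval c (a *: x) = a *: fmod_eval c x.
Proof. exact: evalZ. Qed.
Lemma fmod_eval0 : fmod_eval c (0 : fmod p q) = 0.
Proof. exact: eval0. Qed.
Lemma fmod_eval_sum I (r : seq I) (P : pred I) (F : I -> fmod p q) :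
  fmod_eval c (\sum_(k <- r | P k) F k) = \sum_(k <- r | P k) fmod_eval c (F k).
Proof. exact: (big_morph _ fmod_evalD fmod_eval0). Qed.
End Eval.
End FreeModule.

Definition fdd i p q p' q' (x : fmod p q) : fmod p' q' := fclass (@FTdd i p q p' q' (frepr x)).

Lemma fmod_eval_dd C c (H : Val c) i p q p' q' (x : fmod p q) :
  fmod_eval (C := C) c (@fdd i p q p' q' x) = dd C i (fmod_eval c x).
Proof. exact: fmod_eval_class. Qed.

Definition free_mcx : mcx R n.
Proof.
refine (@Mcx R n (fun p q => fmod p q : lmodType R) fdd _ _ _ _).
- move=> i p q p' q' a u v; apply: fmod_ext => C c H.
  by rewrite !(fmod_eval_dd H, fmod_evalD H, fmod_evalZ H) linearP.
- move=> i p q p' q' x h; apply: fmod_ext => C c H.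
  by rewrite fmod_eval_dd // fmod_eval0 // dd_deg.
- move=> i p q p' q' x h; apply: fmod_ext => C c H.
  by rewrite fmod_eval_dd // fmod_eval0 // dd_vanish.
- move=> l p q p' q' x; apply: fmod_ext => C c H.
  rewrite fmod_eval_sum // fmod_eval0 // -[RHS](dd_rel C l p q p' q' (fmod_eval c x)).
  by apply: eq_bigr => i _; rewrite fmod_evalZ // !fmod_eval_dd.
Defined.

Definition free_gen g : free_mcx (gp g) (gq g) := fclass (FTgen g).

Definition free_lift (C : mcx R n) (c : forall g, C (gp g) (gq g)) (H : Val c) : mhom free_mcx C.
Proof.
refine (@MHom R n free_mcx C (fun p q x => fmod_eval c x) _ _).
- by move=> p q a u v; rewrite /= fmod_evalD // fmod_evalZ.
- by move=> i p q p' q' x; rewrite /= fmod_eval_dd.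
Defined.

Lemma free_lift_gen C c (H : Val c) g : hf (free_lift (C := C) H) (free_gen g) = c g.
Proof. exact: fmod_eval_class. Qed.

Lemma free_eq p q (x y : free_mcx p q) :
  (forall (C : mcx R n) (c : forall g, C (gp g) (gq g)) (H : Val c),
      hf (free_lift H) x = hf (free_lift H) y) -> x = y.
Proof. by move=> h; apply: fmod_ext => C c H; apply: (h C c H). Qed.

Lemma free_hom_ext (C : mcx R n) (phi psi : mhom free_mcx C) :
  (forall g, hf phi (free_gen g) = hf psi (free_gen g)) -> heq phi psi.
Proof.
move=> hg p q x; rewrite -(frepr_class x); elim: (frepr x) => {p q x}.
- exact: hg.
- by move=> p q; rewrite (_ : fclass (FTzero p q) = 0) // !raddf0.
- move=> p q t1 IH1 t2 IH2.
  have -> : fclass (FTadd t1 t2) = (fclass t1 + fclass t2 : free_mcx p q).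
    by apply: fmod_ext => C' c H; rewrite fmod_evalD // !fmod_eval_class.
  by rewrite !raddfD /= IH1 IH2.
- move=> p q a t IH.
  have -> : fclass (FTscale a t) = (a *: fclass t : free_mcx p q).
    by apply: fmod_ext => C' c H; rewrite fmod_evalZ // !fmod_eval_class.
  by rewrite !linearZ /= IH.
- move=> i p q p' q' t IH.
  have -> : fclass (FTdd i p' q' t) = dd free_mcx i (p' := p') (q' := q') (fclass t).
    by apply: fmod_ext => C' c H; rewrite /= fmod_eval_dd // !fmod_eval_class.
  by rewrite !hf_comm IH.
Qed.

Lemma free_gen_eq0 g : (forall C c, Val (C := C) c -> c g = 0) -> free_gen g = 0.
Proof. by move=> h; apply: free_eq => C c H; rewrite free_lift_gen raddf0 (h C c H). Qed.

Lemma free_zrel P Q (a : forall j : nat, free_mcx (P - j%:Z) (Q - j%:Z)) l :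
  (forall C c (H : Val c), zrel (fun j => hf (free_lift (C := C) H) (a j)) l) -> zrel a l.
Proof.
move=> h; apply: free_eq => C c H; rewrite raddf0 -(h C c H).
rewrite [LHS]fmod_eval_sum //; apply: eq_bigr => j _.
by rewrite fmod_evalZ // fmod_eval_dd.
Qed.
End Free.

(** * Realisations of ZW, BW and iota *)

Section Realisations.
Variables (R : comPzRingType) (n : option nat).
Implicit Types (A B C W Z : mcx R n).

Definition mhom_comp A B C (g : mhom B C) (f : mhom A B) : mhom A C.
Proof.
refine (@MHom R n A C (fun p q x => hf g (hf f x)) _ _).
- by move=> p q a u v; rewrite !linearP.
- by move=> i p q p' q' x; rewrite !hf_comm.
Defined.

Lemma ftot_mhom_comp A B C (g : mhom B C) (f : mhom A B) y :
  ftot (mhom_comp g f) y = ftot g (ftot f y).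
Proof. by []. Qed.

Lemma zero_mcx_eq0 p q (x : zero_mcx R n p q) : x = 0.
Proof. exact: thinmx0. Qed.

Lemma zrel_hf A B (phi : mhom A B) P Q (a : forall j : nat, A (P - j%:Z) (Q - j%:Z)) l :
  zrel a l -> zrel (fun j => hf phi (a j)) l.
Proof.
move/zrel_zrelT => h; apply/zrel_zrelT.
rewrite (zrelT_eq (al' := fun j => ftot phi (single (a j)))) => [|j _]; last by rewrite ftot_single.
by rewrite -ftot_zrelT h raddf0.
Qed.

Lemma zrel_eq A P Q (a a' : forall j : nat, A (P - j%:Z) (Q - j%:Z)) l :
  (forall j, (j <= l)%N -> a j = a' j) -> zrel a l -> zrel a' l.
Proof. by move=> h h0; rewrite /zrel -[RHS]h0; apply: eq_bigr => j _; rewrite h // -ltnS. Qed.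

Lemma IsZW_lift Z s p q (a : forall j : nat, Z (p - j%:Z) (q - j%:Z)) :
  IsZW s a -> forall C (al : nat -> tot C), chain s p q al ->
  exists h : mhom Z C, forall j, (j < maxn s 1)%N -> single (hf h (a j)) = al j.
Proof.
move=> [_ U] C al hal; have [c ec zc] := chain_components hal.
by have [[h hh] _] := U C c zc; exists h => j hj; rewrite hh.
Qed.

Lemma IsZW_hom_ext Z s p q (a : forall j : nat, Z (p - j%:Z) (q - j%:Z)) :
  IsZW s a -> forall C (phi psi : mhom Z C),
  (forall j, (j < maxn s 1)%N -> hf phi (a j) = hf psi (a j)) -> heq phi psi.
Proof. by move=> [za U] C phi psi; apply: (U C _ (fun l hl => zrel_hf phi (za l hl))).2. Qed.

(* The generators of BW_{r+1}(p, q-1) as two chains: b_0, ..., b_{r-1}, e and c_0, ..., c_{r-1}. *)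
Definition bw_chain W r p q
  (b : forall j : nat, W (p + r.+1%:Z - 1 - j%:Z) (q + r.+1%:Z - 2 - j%:Z)) (e : W p (q - 1))
  (m : nat) : tot W := if m == r then single e else single (b m).
Definition cw_chain W p q (c : forall j : nat, W (p - 1 - j%:Z) (q - 1 - j%:Z)) (m : nat) : tot W :=
  single (c m).

Lemma chain_bw W r p q b e : (forall l, (l < r)%N -> zrel b l) ->
  chain r (p + r.+1%:Z - 1) (q + r.+1%:Z - 2) (@bw_chain W r p q b e).
Proof.
move=> hb; apply: (chain_trunc (chain_single hb)) => [j|j hj]; last by rewrite /bw_chain ifF //; lia.
rewrite /bw_chain; case: eqP => [->|_]; last exact: homog_single.
by apply: (homog_cast _ _ (homog_single e)); lia.
Qed.

Lemma chain_cw W r p q c : (forall l, (l < r)%N -> zrel c l) ->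
  chain r (p - 1) (q - 1) (@cw_chain W p q c).
Proof. exact: chain_single. Qed.

Lemma IsBW_lift W r p q
  (b : forall j : nat, W (p + r.+1%:Z - 1 - j%:Z) (q + r.+1%:Z - 2 - j%:Z)) (e : W p (q - 1))
  (c : forall j : nat, W (p - 1 - j%:Z) (q - 1 - j%:Z)) : IsBW b e c ->
  forall C (b' g' : nat -> tot C),
  chain r (p + r.+1%:Z - 1) (q + r.+1%:Z - 2) b' -> chain r (p - 1) (q - 1) g' ->
  exists h : mhom W C, (forall m, (m < r.+1)%N -> ftot h (bw_chain b e m) = b' m) /\
                       (forall m, (m < r)%N -> ftot h (cw_chain c m) = g' m).
Proof.
move=> [_ [_ U]] C b' g' hb' hg'.
have [bd ebd zbd] := chain_components hb'; have [cd ecd zcd] := chain_components hg'.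
have [[h [hb [he hc]]] _] := U C bd (tr p (q - 1) (bd r)) cd zbd zcd.
exists h; split=> [m hm|m hm]; last by rewrite /cw_chain ftot_single hc.
rewrite /bw_chain; case: eqP => [->|ne]; rewrite ftot_single; last by rewrite hb ?ebd //; lia.
by rewrite he single_tr ?ebd //; lia.
Qed.

Lemma IsBW_hom_ext W r p q
  (b : forall j : nat, W (p + r.+1%:Z - 1 - j%:Z) (q + r.+1%:Z - 2 - j%:Z)) (e : W p (q - 1))
  (c : forall j : nat, W (p - 1 - j%:Z) (q - 1 - j%:Z)) : IsBW b e c ->
  forall C (phi psi : mhom W C),
  (forall m, (m < r.+1)%N -> ftot phi (bw_chain b e m) = ftot psi (bw_chain b e m)) ->
  (forall m, (m < r)%N -> ftot phi (cw_chain c m) = ftot psi (cw_chain c m)) -> heq phi psi.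
Proof.
move=> [zb [zc U]] C phi psi hbw hcw.
apply: (U C _ (hf phi e) _ (fun l hl => zrel_hf phi (zb l hl)) (fun l hl => zrel_hf phi (zc l hl))).2.
- move=> j hj; move: (hbw j (leqW hj)); rewrite /bw_chain ifF; last by lia.
  by rewrite !ftot_single => /single_inj.
- by move: (hbw r (ltnSn r)); rewrite /bw_chain eqxx !ftot_single => /single_inj.
- by move=> j hj; move: (hcw j hj); rewrite /cw_chain !ftot_single => /single_inj.
Qed.

Definition iota_val W r p q
  (b : forall j : nat, W (p + r.+1%:Z - 1 - j%:Z) (q + r.+1%:Z - 2 - j%:Z)) (e : W p (q - 1))
  (c : forall j : nat, W (p - 1 - j%:Z) (q - 1 - j%:Z)) (j : nat) : W (p - j%:Z) (q - j%:Z) :=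
  dd W j (p' := p - j%:Z) (q' := q - j%:Z) e
  + (-1) ^+ j *: \sum_(j.+1 <= k < r.+1 + j)
                    (-1) ^+ k *: dd W k (p' := p - j%:Z) (q' := q - j%:Z) (b (r.+1 + j - 1 - k)%N)
  + (if j is j'.+1 then tr (p - j'.+1%:Z) (q - j'.+1%:Z) (c j') else 0).

Lemma single_iota_val W r p q b e c j :
  single (@iota_val W r p q b e c j) = iota_tot r.+1 (bw_chain b e) (cw_chain c) j.
Proof.
rewrite /iota_val /iota_tot /iota_b /iota_bsum !raddfD /=; congr (_ + _ + _).
- by rewrite /bw_chain eqxx single_dd //; lia.
- rewrite linearZ linear_sum /=; congr (_ *: _).
  rewrite big_nat_cond [RHS]big_nat_cond; apply: eq_bigr => k /andP [/andP [h1 h2] _].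
  by rewrite linearZ /= single_dd ?/bw_chain ?ifF //; lia.
- by case: j => [|j] /=; [rewrite raddf0 | rewrite /cw_chain single_tr //; lia].
Qed.

Lemma zrel_iota_val W r p q b e c :
  (forall l, (l < r)%N -> zrel b l) -> (forall l, (l < r)%N -> zrel c l) ->
  forall l, (l < r.+1)%N -> zrel (@iota_val W r p q b e c) l.
Proof.
move=> hb hc l hl; apply/zrel_zrelT.
rewrite (zrelT_eq (al' := iota_tot r.+1 (bw_chain b e) (cw_chain c))) => [|j _].
  exact: (chain_iota_tot (chain_bw e hb) (chain_cw hc)).2.
exact: single_iota_val.
Qed.

Lemma iota_spec_single W Z r p q (a : forall j : nat, Z (p - j%:Z) (q - j%:Z))
  (b : forall j : nat, W (p + r.+1%:Z - 1 - j%:Z) (q + r.+1%:Z - 2 - j%:Z)) (e : W p (q - 1))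
  (c : forall j : nat, W (p - 1 - j%:Z) (q - 1 - j%:Z)) (i : mhom Z W) :
  iota_spec a b e c i ->
  forall j, (j < r.+1)%N -> single (hf i (a j)) = iota_tot r.+1 (bw_chain b e) (cw_chain c) j.
Proof. by move=> hi j hj; rewrite -single_iota_val hi. Qed.
End Realisations.

Inductive bw_label := BWb of nat | BWe | BWc of nat.

Section FreeRealisations.
Variables (R : comPzRingType) (n : option nat).

(* Generators beyond a_{max(s,1)-1} are set to zero, so that the free generators are indexed by nat. *)
Definition zw_rel s p q (C : mcx R n) (c : forall j : nat, C (p - j%:Z) (q - j%:Z)) : Prop :=
  (forall l, (l < s)%N -> zrel c l) /\ (forall j, (maxn s 1 <= j)%N -> c j = 0).
Definition zw_free s p q : mcx R n :=
  @free_mcx R n nat (fun j => p - j%:Z) (fun j => q - j%:Z) (@zw_rel s p q).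
Definition zw_gen s p q (j : nat) : zw_free s p q (p - j%:Z) (q - j%:Z) :=
  @free_gen R n nat (fun j => p - j%:Z) (fun j => q - j%:Z) (@zw_rel s p q) j.

Lemma IsZW_free s p q : IsZW s (zw_gen s p q).
Proof.
split.
  move=> l hl; apply: free_zrel => C c H.
  by apply: zrel_eq (H.1 l hl) => j _; rewrite free_lift_gen.
move=> C c hc; split.
  pose c' j := if (j < maxn s 1)%N then c j else 0.
  have H : @zw_rel s p q C c'.
    split=> [l hl|j hj]; last by rewrite /c' ifF //; lia.
    by apply: zrel_eq (hc l hl) => j hj; rewrite /c' ifT //; lia.
  by exists (free_lift H) => j hj; rewrite free_lift_gen /c' hj.
move=> phi psi h; apply: free_hom_ext => j.
case: (ltnP j (maxn s 1)) => hj; first exact: h.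
by rewrite free_gen_eq0 ?raddf0 // => C' c' H'; exact: H'.2.
Qed.

Definition bw_p s p (g : bw_label) : int :=
  match g with BWb j => p + s%:Z - 1 - j%:Z | BWe => p | BWc j => p - 1 - j%:Z end.
Definition bw_q s q (g : bw_label) : int :=
  match g with BWb j => q + s%:Z - 2 - j%:Z | BWe => q - 1 | BWc j => q - 1 - j%:Z end.

Definition bw_rel s p q (C : mcx R n) (c : forall g, C (bw_p s p g) (bw_q s q g)) : Prop :=
  [/\ forall l, (l < s.-1)%N -> zrel (P := p + s%:Z - 1) (Q := q + s%:Z - 2) (fun j => c (BWb j)) l,
      forall l, (l < s.-1)%N -> zrel (P := p - 1) (Q := q - 1) (fun j => c (BWc j)) l
    & forall j, (s.-1 <= j)%N -> c (BWb j) = 0 /\ c (BWc j) = 0].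
Definition bw_free s p q : mcx R n := @free_mcx R n bw_label (bw_p s p) (bw_q s q) (@bw_rel s p q).
Definition bw_b s p q (j : nat) : bw_free s p q (p + s%:Z - 1 - j%:Z) (q + s%:Z - 2 - j%:Z) :=
  @free_gen R n bw_label (bw_p s p) (bw_q s q) (@bw_rel s p q) (BWb j).
Definition bw_e s p q : bw_free s p q p (q - 1) :=
  @free_gen R n bw_label (bw_p s p) (bw_q s q) (@bw_rel s p q) BWe.
Definition bw_c s p q (j : nat) : bw_free s p q (p - 1 - j%:Z) (q - 1 - j%:Z) :=
  @free_gen R n bw_label (bw_p s p) (bw_q s q) (@bw_rel s p q) (BWc j).

Lemma IsBW_free s p q : IsBW (bw_b s p q) (bw_e s p q) (bw_c s p q).
Proof.
split.
  move=> l hl; apply: free_zrel => C c H; have [zb _ _] := H.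
  by apply: zrel_eq (zb l hl) => j _; exact: (esym (free_lift_gen H (BWb j))).
split.
  move=> l hl; apply: free_zrel => C c H; have [_ zc _] := H.
  by apply: zrel_eq (zc l hl) => j _; exact: (esym (free_lift_gen H (BWc j))).
move=> C b' e' c' hb hc; split.
  pose val g := match g as g0 return C (bw_p s p g0) (bw_q s q g0) with
                | BWb j => if (j < s.-1)%N then b' j else 0
                | BWe => e'
                | BWc j => if (j < s.-1)%N then c' j else 0 end.
  have H : @bw_rel s p q C val.
    split=> [l hl|l hl|j hj]; last by rewrite /val !ifF //; lia.
      by apply: zrel_eq (hb l hl) => j hj; rewrite /val ifT //; lia.
    by apply: zrel_eq (hc l hl) => j hj; rewrite /val ifT //; lia.
  exists (free_lift H); split=> [j hj|]; last split=> [|j hj].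
  - by move: (free_lift_gen H (BWb j)); rewrite /val hj => e; exact: e.
  - exact: (free_lift_gen H BWe).
  - by move: (free_lift_gen H (BWc j)); rewrite /val hj => e; exact: e.
move=> phi psi h1 h2 h3; apply: free_hom_ext => -[j||j] //.
  case: (ltnP j s.-1) => hj; first exact: h1.
  by rewrite free_gen_eq0 ?raddf0 // => C' v [_ _ H]; case: (H j hj).
case: (ltnP j s.-1) => hj; first exact: h3.
by rewrite free_gen_eq0 ?raddf0 // => C' v [_ _ H]; case: (H j hj).
Qed.

Lemma iota_free r p q : exists i : mhom (zw_free r.+1 p q) (bw_free r.+1 p q),
  iota_spec (zw_gen r.+1 p q) (bw_b r.+1 p q) (bw_e r.+1 p q) (bw_c r.+1 p q) i.
Proof.
have [_ U] := IsZW_free r.+1 p q; have [hb [hc _]] := IsBW_free r.+1 p q.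
have [[i hi] _] := U _ _ (zrel_iota_val (bw_e r.+1 p q) hb hc).
by exists i => j hj; rewrite hi.
Qed.
End FreeRealisations.

(** * Lifting properties *)

Section LiftingProperties.
Variables (R : comPzRingType) (n : option nat) (A B : mcx R n) (f : mhom A B).

Lemma Jinj_of_lifts_chains k : lifts_chains f k -> Jinj k f.
Proof.
move=> hJ p q Z a hZ u v _.
have [al hal fal] := hJ _ _ _ (chain_single (fun l hl => zrel_hf v (hZ.1 l hl))).
have [h hh] := IsZW_lift hZ hal.
exists h; split=> [p' q' x|]; first by rewrite (zero_mcx_eq0 x) !raddf0.
suff hv : heq (mhom_comp f h) v by exact: hv.
apply: (IsZW_hom_ext hZ) => j hj /=.
by apply: single_inj; rewrite -ftot_single hh // fal.
Qed.

Lemma lifts_chains_of_Jinj k : Jinj k f -> lifts_chains f k.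
Proof.
move=> hJ P Q be hbe; have hZ := IsZW_free R n k P Q.
have [v hv] := IsZW_lift hZ hbe.
have hcomm p q (x : zero_mcx R n p q) :
    hf f (hf (zero_hom A) x) = hf v (hf (zero_hom _) x) by rewrite /= !raddf0.
have [h [_ hh]] := hJ P Q _ _ hZ (zero_hom A) v hcomm.
exists (fun j => single (hf h (zw_gen R n k P Q j))).
  exact: chain_single (fun l hl => zrel_hf h (hZ.1 l hl)).
by move=> j hj; rewrite ftot_single hh hv.
Qed.

Lemma Iinj_of_lifts_iota r : lifts_iota f r -> Iinj r f.
Proof.
move=> hI p q Z W a b e c i hZ hW hi u v hcomm.
have hiT := iota_spec_single hi.
pose bv m := ftot v (bw_chain b e m); pose cv m := ftot v (cw_chain c m).
have hal := chain_single (fun l hl => zrel_hf u (hZ.1 l hl)).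
have hF j : (j < r.+1)%N -> ftot f (single (hf u (a j))) = iota_tot r.+1 bv cv j.
  by move=> hj; rewrite ftot_single hcomm -ftot_single hiT // ftot_iota_tot.
have [b' [g' [hb' hg' fb' fg' hal']]] :=
  hI p q _ bv cv hal (ftot_chain v (chain_bw e hW.1)) (ftot_chain v (chain_cw hW.2.1)) hF.
have [h [hb1 hc1]] := IsBW_lift hW hb' hg'.
exists h; split.
  suff hu : heq (mhom_comp h i) u by exact: hu.
  apply: (IsZW_hom_ext hZ) => j hj /=; apply: single_inj.
  rewrite -ftot_single hiT // ftot_iota_tot hal' //.
  by apply: iota_tot_eq => [m hm|m hm|//]; [rewrite hb1 | rewrite hc1].
suff hv : heq (mhom_comp f h) v by exact: hv.
apply: (IsBW_hom_ext hW) => [m hm|m hm].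
  by rewrite ftot_mhom_comp hb1 // fb'.
by rewrite ftot_mhom_comp hc1 // fg'.
Qed.

Lemma lifts_iota_of_Iinj r : Iinj r f -> lifts_iota f r.
Proof.
move=> hI p q al b g hal hb hg hF.
have hZ := IsZW_free R n r.+1 p q; have hW := IsBW_free R n r.+1 p q.
have [i hi] := iota_free R n r p q; have hiT := iota_spec_single hi.
have [u hu] := IsZW_lift hZ hal.
have [v [hvb hvc]] := IsBW_lift hW hb hg.
have hcomm p' q' (x : zw_free R n r.+1 p q p' q') : hf f (hf u x) = hf v (hf i x).
  suff e : heq (mhom_comp f u) (mhom_comp v i) by exact: e.
  apply: (IsZW_hom_ext hZ) => j hj /=; apply: single_inj.
  rewrite -[LHS]ftot_single -[RHS]ftot_single hu // hF // hiT // ftot_iota_tot.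
  by apply: iota_tot_eq => [m hm|m hm|//]; [rewrite hvb | rewrite hvc].
have [h [hh1 hh2]] := hI p q _ _ _ _ _ _ i hZ hW hi u v hcomm.
have fh := ftot_comp hh2.
exists (fun m => ftot h (bw_chain (bw_b R n r.+1 p q) (bw_e R n r.+1 p q) m)),
       (fun m => ftot h (cw_chain (bw_c R n r.+1 p q) m)); split.
- exact: (ftot_chain h (chain_bw (bw_e R n r.+1 p q) hW.1)).
- exact: (ftot_chain h (chain_cw hW.2.1)).
- by move=> j hj; rewrite fh hvb.
- by move=> j hj; rewrite fh hvc.
- by move=> j hj; rewrite -ftot_iota_tot -hiT // ftot_single hh1 hu.
Qed.
End LiftingProperties.

Theorem mainTheorem7 (R : comPzRingType) (n : option nat)
    (hn : if n is Some m then (2 <= m)%N else true)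
    (r : nat) (A B : mcx R n) (f : mhom A B) :
  Iinj r f <-> (Eqi r f /\ Jinj 0 f /\ Jinj r f).
Proof.
split=> [/lifts_iota_of_Iinj hI | [hE [/lifts_chains_of_Jinj hJ0 /lifts_chains_of_Jinj hJr]]].
  split; first exact: Eqi_of_lifts_iota hI.
  split; apply: Jinj_of_lifts_chains.
    exact: lifts_chains0_of_lifts_iota hI.
  exact: lifts_chains_of_lifts_iota hI.
exact/Iinj_of_lifts_iota/lifts_iota_of_Eqi.
Qed.
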